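(* Let $H_1,H_2$ be separable Hilbert spaces, $K\in B(H_1)$, $L\in B(H_2)$. Let $\{x_n\}_{n\geqslant1}$ be a $K$-frame for $H_1$ and $\{y_n\}_{n\geqslant1}$ an $L$-frame for $H_2$, with analysis operators $\theta_1$ and $\theta_2$ respectively. If $\overline{R(\theta_1)}=R(\theta_2)^\perp$ in $\ell^2$, then $\{x_n\oplus y_n\}_{n\geqslant1}$ is a $K\oplus L$-minimal frame for $H_1\oplus H_2$.
   Context: $H_1\oplus H_2$ is the Hilbert space of pairs $x\oplus y$ with inner product $\langle x\oplus y,a\oplus b\rangle=\langle x,a\rangle+\langle y,b\rangle$; $(K\oplus L)(x\oplus y)=K(x)\oplus L(y)$. For a Hilbert space $H$ and $K\in B(H)$, $\{z_n\}_{n\geqslant1}$ is a $K$-frame if there are $A,B>0$ with $A\|K^*z\|^2\leq\sum_n|\langle z,z_n\rangle|^2\leq B\|z\|^2$ for all $z\in H$. Its analysis operator is $\theta:H\to\ell^2$, $\theta(z)=\{\langle z,z_n\rangle\}_n$, and its synthesis operator is $T=\theta^*:\ell^2\to H$, $T(\{a_n\})=\sum_na_nz_n$. A $K$-frame is $K$-minimal if its synthesis operator is injective. $R(\cdot)$ denotes range. *)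

From Stdlib Require Import Reals.
From Coquelicot Require Import Coquelicot.
Set Implicit Arguments.

Local Open Scope R_scope.

(* A complex inner-product space: raw data.  Hilbert-space axioms are
   the separate predicate [is_hilbert] below. Scalars are complex numbers. *)
Record IPS := {
  car :> Type;
  vzero : car;
  vadd : car -> car -> car;
  vopp : car -> car;
  vscal : C -> car -> car;
  inner : car -> car -> C   (* linear in the first argument *)
}.

Definition vsub {H : IPS} (x y : H) : H := vadd H x (vopp H y).

Definition hnorm {H : IPS} (x : H) : R := sqrt (Re (inner H x x)).

Definition is_hilbert (H : IPS) : Prop :=
  (forall x y z : H, vadd H x (vadd H y z) = vadd H (vadd H x y) z) /\
  (forall x y : H, vadd H x y = vadd H y x) /\
  (forall x : H, vadd H x (vzero H) = x) /\
  (forall x : H, vadd H x (vopp H x) = vzero H) /\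
  (forall x : H, vscal H (RtoC 1) x = x) /\
  (forall (a b : C) (x : H), vscal H a (vscal H b x) = vscal H (a * b)%C x) /\
  (forall (a : C) (x y : H), vscal H a (vadd H x y) = vadd H (vscal H a x) (vscal H a y)) /\
  (forall (a b : C) (x : H), vscal H (a + b)%C x = vadd H (vscal H a x) (vscal H b x)) /\
  (forall (a : C) (x y z : H),
      inner H (vadd H (vscal H a x) y) z = (a * inner H x z + inner H y z)%C) /\
  (forall x y : H, inner H x y = Cconj (inner H y x)) /\
  (forall x : H, 0 <= Re (inner H x x)) /\
  (forall x : H, inner H x x = RtoC 0 -> x = vzero H) /\
  (forall u : nat -> H,
      (forall eps, 0 < eps -> exists N, forall m n, (N <= m)%nat -> (N <= n)%nat ->
          hnorm (vsub (u m) (u n)) < eps) ->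
      exists l : H, forall eps, 0 < eps -> exists N, forall n, (N <= n)%nat ->
          hnorm (vsub (u n) l) < eps).

Definition separable (H : IPS) : Prop :=
  exists d : nat -> H, forall (x : H) eps, 0 < eps -> exists n, hnorm (vsub x (d n)) < eps.

Definition bounded_op {H : IPS} (K : H -> H) : Prop :=
  (forall (a : C) (x y : H), K (vadd H (vscal H a x) y) = vadd H (vscal H a (K x)) (K y)) /\
  (exists M, forall x : H, hnorm (K x) <= M * hnorm x).

Definition is_adjoint {H : IPS} (K Kadj : H -> H) : Prop :=
  forall x y : H, inner H (K x) y = inner H x (Kadj y).

Definition dsum (H1 H2 : IPS) : IPS := {|
  car := (car H1 * car H2)%type;
  vzero := (vzero H1, vzero H2);
  vadd := fun p q => (vadd H1 (fst p) (fst q), vadd H2 (snd p) (snd q));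
  vopp := fun p => (vopp H1 (fst p), vopp H2 (snd p));
  vscal := fun a p => (vscal H1 a (fst p), vscal H2 a (snd p));
  inner := fun p q => (inner H1 (fst p) (fst q) + inner H2 (snd p) (snd q))%C
|}.

Definition dsum_op {H1 H2 : IPS} (K : H1 -> H1) (L : H2 -> H2) : dsum H1 H2 -> dsum H1 H2 :=
  fun p => (K (fst p), L (snd p)).

Definition dsum_seq {H1 H2 : IPS} (x : nat -> H1) (y : nat -> H2) : nat -> dsum H1 H2 :=
  fun n => (x n, y n).

Definition l2 (a : nat -> C) : Prop := ex_series (fun n => (Cmod (a n))^2).

Definition l2dist (a b : nat -> C) : R := sqrt (Series (fun n => (Cmod (a n - b n)%C)^2)).

Definition l2inner (a b : nat -> C) : C :=
  (Series (fun n => Re (a n * Cconj (b n))%C), Series (fun n => Im (a n * Cconj (b n))%C)).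

Definition analysis {H : IPS} (z : nat -> H) (v : H) : nat -> C := fun n => inner H v (z n).

Definition in_range_analysis {H : IPS} (z : nat -> H) (a : nat -> C) : Prop :=
  exists v : H, forall n, a n = analysis z v n.

Definition in_closure_range {H : IPS} (z : nat -> H) (a : nat -> C) : Prop :=
  l2 a /\ forall eps, 0 < eps -> exists v : H, l2dist a (analysis z v) < eps.

Definition in_perp_range {H : IPS} (z : nat -> H) (a : nat -> C) : Prop :=
  l2 a /\ forall b, in_range_analysis z b -> l2inner a b = RtoC 0.

Definition is_K_frame {H : IPS} (K : H -> H) (z : nat -> H) : Prop :=
  exists Kadj : H -> H, is_adjoint K Kadj /\
  exists A B : R, 0 < A /\ 0 < B /\
    forall v : H,
      ex_series (fun n => (Cmod (inner H v (z n)))^2) /\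
      A * (hnorm (Kadj v))^2 <= Series (fun n => (Cmod (inner H v (z n)))^2) /\
      Series (fun n => (Cmod (inner H v (z n)))^2) <= B * (hnorm v)^2.

Fixpoint psum {H : IPS} (a : nat -> C) (z : nat -> H) (N : nat) : H :=
  match N with
  | O => vzero H
  | S N' => vadd H (psum a z N') (vscal H (a N') (z N'))
  end.

(* synthesis operator T : l^2 -> H, T a = v means sum_n a_n z_n converges to v in norm *)
Definition synthesis_maps {H : IPS} (z : nat -> H) (a : nat -> C) (v : H) : Prop :=
  l2 a /\ forall eps, 0 < eps -> exists N, forall M, (N <= M)%nat ->
    hnorm (vsub (psum a z M) v) < eps.

Definition synthesis_injective {H : IPS} (z : nat -> H) : Prop :=
  forall (a b : nat -> C) (v : H),
    synthesis_maps z a v -> synthesis_maps z b v -> forall n, a n = b n.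

Definition is_K_minimal_frame {H : IPS} (K : H -> H) (z : nat -> H) : Prop :=
  is_K_frame K z /\ synthesis_injective z.

From Stdlib Require Import Reals Lra.
From Coquelicot Require Import Coquelicot.

(** The analysis coefficients of [v1 ⊕ v2] against [x_n ⊕ y_n] are [θ1 v1 + θ2 v2].
    Since [θ1 v1] lies in the closure of [R(θ1)], which is [R(θ2)^⊥], the cross term
    vanishes and [‖θ(v1 ⊕ v2)‖² = ‖θ1 v1‖² + ‖θ2 v2‖²]; the frame inequalities then hold
    with constants [min A_i] and [max B_i], the adjoint of [K ⊕ L] being [K* ⊕ L*].
    If two coefficient sequences [a] and [b] synthesize the same vector, then norm
    convergence of the partial sums (with Cauchy–Schwarz) makes [c = a - b] orthogonal
    to both [R(θ1)] and [R(θ2)].  The second fact puts [c] in the closure of [R(θ1)],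
    and [‖c‖ <= ‖c - θ1 v‖] for every [v] then forces [c = 0]. *)

Local Open Scope R_scope.

Lemma Cmod_sqr (p : C) : Cmod p ^ 2 = Re p ^ 2 + Im p ^ 2.
Proof. unfold Cmod. apply pow2_sqrt. nra. Qed.

Lemma Cmod_sqr_add (p q : C) :
  Cmod (p + q) ^ 2 = Cmod p ^ 2 + Cmod q ^ 2 + 2 * Re (p * Cconj q).
Proof. rewrite !Cmod_sqr. destruct p, q. simpl. ring. Qed.

Lemma Cmod_sqr_sub (p q : C) :
  Cmod (p - q) ^ 2 = Cmod p ^ 2 + Cmod q ^ 2 - 2 * Re (p * Cconj q).
Proof. rewrite !Cmod_sqr. destruct p, q. simpl. ring. Qed.

Lemma ex_series_Re_mul_conj {a b : nat -> C} :
  l2 a -> l2 b -> ex_series (fun n => Re (a n * Cconj (b n))).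
Proof.
  intros ha hb.
  apply (@ex_series_le R_AbsRing R_CompleteNormedModule)
    with (fun n => / 2 * (Cmod (a n) ^ 2 + Cmod (b n) ^ 2)).
  - intro n. apply Rabs_le.
    pose proof (pow2_ge_0 (Cmod (a n + b n))). pose proof (pow2_ge_0 (Cmod (a n - b n))).
    rewrite Cmod_sqr_add in *. rewrite Cmod_sqr_sub in *. lra.
  - exact (ex_series_scal (/ 2) _ (ex_series_plus _ _ ha hb)).
Qed.

Lemma is_series_Cmod_sqr_add {a b : nat -> C} : l2 a -> l2 b ->
  is_series (fun n => Cmod (a n + b n) ^ 2)
    (Series (fun n => Cmod (a n) ^ 2) + Series (fun n => Cmod (b n) ^ 2)
     + 2 * Re (l2inner a b)).
Proof.
  intros ha hb.
  eapply is_series_ext; [intro n; symmetry; apply Cmod_sqr_add |].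
  apply (is_series_plus _ _ _ _
           (is_series_plus _ _ _ _ (Series_correct _ ha) (Series_correct _ hb))).
  exact (is_series_scal 2 _ _ (Series_correct _ (ex_series_Re_mul_conj ha hb))).
Qed.

Lemma is_series_Cmod_sqr_sub {a b : nat -> C} : l2 a -> l2 b ->
  is_series (fun n => Cmod (a n - b n) ^ 2)
    (Series (fun n => Cmod (a n) ^ 2) + Series (fun n => Cmod (b n) ^ 2)
     - 2 * Re (l2inner a b)).
Proof.
  intros ha hb.
  eapply is_series_ext; [intro n; symmetry; apply Cmod_sqr_sub |].
  apply (is_series_minus _ _ _ _
           (is_series_plus _ _ _ _ (Series_correct _ ha) (Series_correct _ hb))).
  exact (is_series_scal 2 _ _ (Series_correct _ (ex_series_Re_mul_conj ha hb))).
Qed.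

Lemma l2_sub {a b : nat -> C} : l2 a -> l2 b -> l2 (fun n => a n - b n)%C.
Proof. intros ha hb. eexists. exact (is_series_Cmod_sqr_sub ha hb). Qed.

Lemma Series_ge_term {f : nat -> R} (k : nat) :
  (forall n, 0 <= f n) -> ex_series f -> f k <= Series f.
Proof.
  intros hf hex.
  apply Rle_trans with (sum_f_R0 f k).
  - destruct k as [| k]; simpl; [lra |]. pose proof (cond_pos_sum f k hf). lra.
  - apply sum_incr; [apply is_series_Reals, Series_correct, hex | exact hf].
Qed.

Lemma Series_ge0 {f : nat -> R} : (forall n, 0 <= f n) -> ex_series f -> 0 <= Series f.
Proof.
  intros hf hex.
  apply Rle_trans with (f 0%nat); [apply hf | apply Series_ge_term; assumption].
Qed.

Section InnerProduct.

Context {H : IPS}.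
Hypothesis hH : is_hilbert H.

Lemma vadd0 (x : H) : vadd H x (vzero H) = x.
Proof. destruct hH as (_ & _ & h & _). apply h. Qed.

Lemma vaddN (x : H) : vadd H x (vopp H x) = vzero H.
Proof. destruct hH as (_ & _ & _ & h & _). apply h. Qed.

Lemma vscal1 (x : H) : vscal H (RtoC 1) x = x.
Proof. destruct hH as (_ & _ & _ & _ & h & _). apply h. Qed.

Lemma inner_linl (a : C) (x y z : H) :
  inner H (vadd H (vscal H a x) y) z = (a * inner H x z + inner H y z)%C.
Proof. destruct hH as (_ & _ & _ & _ & _ & _ & _ & _ & h & _). apply h. Qed.

Lemma inner_conj (x y : H) : inner H x y = Cconj (inner H y x).
Proof. destruct hH as (_ & _ & _ & _ & _ & _ & _ & _ & _ & h & _). apply h. Qed.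

Lemma Re_inner_self_ge0 (x : H) : 0 <= Re (inner H x x).
Proof. destruct hH as (_ & _ & _ & _ & _ & _ & _ & _ & _ & _ & h & _). apply h. Qed.

Lemma inner_addl (x y z : H) :
  inner H (vadd H x y) z = (inner H x z + inner H y z)%C.
Proof. rewrite <- (vscal1 x) at 1. rewrite inner_linl. ring. Qed.

Lemma inner_0l (z : H) : inner H (vzero H) z = RtoC 0.
Proof.
  pose proof (inner_addl (vzero H) (vzero H) z) as e.
  rewrite vadd0 in e.
  transitivity (inner H (vzero H) z + inner H (vzero H) z - inner H (vzero H) z)%C.
  - ring.
  - rewrite <- e. ring.
Qed.

Lemma inner_scall (a : C) (x z : H) :
  inner H (vscal H a x) z = (a * inner H x z)%C.
Proof. rewrite <- (vadd0 (vscal H a x)), inner_linl, inner_0l. ring. Qed.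

Lemma inner_oppl (x z : H) : inner H (vopp H x) z = (- inner H x z)%C.
Proof.
  pose proof (inner_addl x (vopp H x) z) as e.
  rewrite vaddN, inner_0l in e.
  transitivity (inner H x z + inner H (vopp H x) z - inner H x z)%C.
  - ring.
  - rewrite <- e. ring.
Qed.

Lemma inner_scalr (a : C) (x z : H) :
  inner H x (vscal H a z) = (Cconj a * inner H x z)%C.
Proof.
  rewrite inner_conj, inner_scall, Cmult_conj, <- inner_conj. reflexivity.
Qed.

Lemma Re_inner_sym (x y : H) : Re (inner H x y) = Re (inner H y x).
Proof. rewrite (inner_conj x y). apply re_conj. Qed.

Lemma Re_inner_lincomb (s t : R) (u w x : H) :
  Re (inner H (vadd H (vscal H (RtoC s) u) (vscal H (RtoC t) w)) x)
  = s * Re (inner H u x) + t * Re (inner H w x).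
Proof.
  rewrite inner_addl, !inner_scall.
  destruct (inner H u x), (inner H w x). simpl. ring.
Qed.

Lemma Re_inner_quadratic (s t : R) (u w : H) :
  2 * s * t * Re (inner H u w) <= s ^ 2 * Re (inner H u u) + t ^ 2 * Re (inner H w w).
Proof.
  set (p := vadd H (vscal H (RtoC s) u) (vscal H (RtoC (- t)) w)).
  pose proof (Re_inner_self_ge0 p) as hp.
  unfold p at 1 in hp. rewrite Re_inner_lincomb in hp.
  rewrite (Re_inner_sym u p), (Re_inner_sym w p) in hp.
  unfold p in hp. rewrite !Re_inner_lincomb, (Re_inner_sym w u) in hp.
  nra.
Qed.

(* With [r = Re <u, w>], take [(s, t) = (r, ‖u‖²)] in [Re_inner_quadratic],
   or [(s, t) = (‖w‖² + 1, r)] when [‖u‖ = 0]. *)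
Lemma Re_inner_sqr_le (u w : H) :
  Re (inner H u w) ^ 2 <= Re (inner H u u) * Re (inner H w w).
Proof.
  pose proof (Re_inner_self_ge0 u) as hA. pose proof (Re_inner_self_ge0 w) as hW.
  destruct hA as [hA | hA].
  - pose proof (Re_inner_quadratic (Re (inner H u w)) (Re (inner H u u)) u w). nra.
  - pose proof (Re_inner_quadratic (Re (inner H w w) + 1) (Re (inner H u w)) u w).
    rewrite <- hA in *. nra.
Qed.

Lemma hnorm_sqr (x : H) : hnorm x ^ 2 = Re (inner H x x).
Proof. apply pow2_sqrt, Re_inner_self_ge0. Qed.

Lemma Rabs_Re_inner_le (u w : H) : Rabs (Re (inner H u w)) <= hnorm u * hnorm w.
Proof.
  unfold hnorm. rewrite <- sqrt_mult_alt, <- sqrt_Rsqr_abs by apply Re_inner_self_ge0.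
  apply sqrt_le_1_alt. rewrite Rsqr_pow2. apply Re_inner_sqr_le.
Qed.

Lemma Re_inner_vsub (u v w : H) :
  Re (inner H (vsub u v) w) = Re (inner H u w) - Re (inner H v w).
Proof.
  unfold vsub. rewrite inner_addl, inner_oppl.
  destruct (inner H u w), (inner H v w). simpl. ring.
Qed.

Lemma sum_n_Re_inner_psum (a : nat -> C) (z : nat -> H) (w : H) (N : nat) :
  sum_n (fun n => Re (a n * inner H (z n) w)) N = Re (inner H (psum a z (S N)) w).
Proof.
  induction N as [| N IHN].
  - rewrite sum_O. simpl psum. rewrite inner_addl, inner_0l, inner_scall. simpl. ring.
  - rewrite sum_Sn, IHN. simpl psum. rewrite (inner_addl (psum a z (S N))), inner_scall.
    reflexivity.
Qed.

Lemma synthesis_maps_hnorm_lim {z : nat -> H} {a : nat -> C} {v : H} :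
  synthesis_maps z a v -> is_lim_seq (fun M => hnorm (vsub (psum a z M) v)) 0.
Proof.
  intros [_ hconv]. apply is_lim_seq_spec. intros eps.
  destruct (hconv eps (cond_pos eps)) as [N hN]. exists N. intros M hM.
  rewrite Rminus_0_r, Rabs_pos_eq by apply sqrt_pos. exact (hN M hM).
Qed.

Lemma synthesis_maps_is_series_Re {z : nat -> H} {a : nat -> C} {v : H} (w : H) :
  synthesis_maps z a v ->
  is_series (fun n => Re (a n * inner H (z n) w)) (Re (inner H v w)).
Proof.
  intros hs.
  assert (herr : is_lim_seq (fun M => Re (inner H (vsub (psum a z M) v) w)) 0).
  { set (e M := hnorm (vsub (psum a z M) v) * hnorm w).
    assert (he : is_lim_seq e 0).
    { replace (Finite 0) with (Rbar_mult 0 (hnorm w)) by (simpl; f_equal; ring).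
      apply is_lim_seq_scal_r, (synthesis_maps_hnorm_lim hs). }
    apply is_lim_seq_le_le with (u := fun M => - e M) (w := e); [| | exact he].
    - intro M. apply Rabs_le_between, Rabs_Re_inner_le.
    - replace (Finite 0) with (Rbar_opp 0) by (simpl; f_equal; ring).
      apply -> is_lim_seq_opp. exact he. }
  assert (hpsum : is_lim_seq (fun M => Re (inner H (psum a z M) w)) (Re (inner H v w))).
  { replace (Finite (Re (inner H v w))) with (Rbar_plus 0 (Re (inner H v w)))
      by (simpl; f_equal; ring).
    eapply is_lim_seq_ext; [| apply (is_lim_seq_plus' _ _ _ _ herr (is_lim_seq_const _))].
    intro M. simpl. rewrite Re_inner_vsub. ring. }
  apply is_lim_seq_incr_1 in hpsum.
  enough (h : is_lim_seq (sum_n (fun n => Re (a n * inner H (z n) w))) (Re (inner H v w)))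
    by exact h.
  eapply is_lim_seq_ext; [| exact hpsum].
  intro N. symmetry. apply sum_n_Re_inner_psum.
Qed.

Lemma synthesis_maps_is_series_Im {z : nat -> H} {a : nat -> C} {v : H} (w : H) :
  synthesis_maps z a v ->
  is_series (fun n => Im (a n * inner H (z n) w)) (Im (inner H v w)).
Proof.
  intros hs.
  replace (Im (inner H v w)) with (Re (inner H v (vscal H Ci w)))
    by (rewrite inner_scalr; destruct (inner H v w); simpl; ring).
  eapply is_series_ext; [| exact (synthesis_maps_is_series_Re (vscal H Ci w) hs)].
  intro n. cbv beta. rewrite inner_scalr. destruct (a n), (inner H (z n) w). simpl. ring.
Qed.

End InnerProduct.

Lemma synthesis_maps_sub_perp {H : IPS} (hH : is_hilbert H)
  {z : nat -> H} {a b : nat -> C} {v : H} :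
  synthesis_maps z a v -> synthesis_maps z b v -> in_perp_range z (fun n => a n - b n)%C.
Proof.
  intros ha hb. split; [exact (l2_sub (proj1 ha) (proj1 hb)) |].
  intros c [w hw].
  assert (hterm : forall n, ((a n - b n) * Cconj (c n))%C
                            = (a n * inner H (z n) w - b n * inner H (z n) w)%C).
  { intro n. rewrite hw. unfold analysis. rewrite <- (inner_conj hH). ring. }
  assert (hRe : is_series (fun n => Re ((a n - b n) * Cconj (c n))%C) 0).
  { replace 0 with (Re (inner H v w) - Re (inner H v w)) by ring.
    eapply is_series_ext;
      [| exact (is_series_minus _ _ _ _ (synthesis_maps_is_series_Re hH w ha)
                                        (synthesis_maps_is_series_Re hH w hb))].
    intro n. cbv beta. rewrite hterm. reflexivity. }
  assert (hIm : is_series (fun n => Im ((a n - b n) * Cconj (c n))%C) 0).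
  { replace 0 with (Im (inner H v w) - Im (inner H v w)) by ring.
    eapply is_series_ext;
      [| exact (is_series_minus _ _ _ _ (synthesis_maps_is_series_Im hH w ha)
                                        (synthesis_maps_is_series_Im hH w hb))].
    intro n. cbv beta. rewrite hterm. reflexivity. }
  unfold l2inner. rewrite (is_series_unique _ _ hRe), (is_series_unique _ _ hIm).
  reflexivity.
Qed.

Lemma analysis_in_closure_range {H : IPS} (z : nat -> H) (v : H) :
  l2 (analysis z v) -> in_closure_range z (analysis z v).
Proof.
  intros hl2. split; [exact hl2 |]. intros eps heps. exists v. unfold l2dist.
  rewrite (Series_ext _ (fun n => 0 * Cmod (analysis z v n) ^ 2)).
  - rewrite Series_scal_l, Rmult_0_l, sqrt_0. exact heps.
  - intro n. replace (analysis z v n - analysis z v n)%C with (RtoC 0) by ring.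
    rewrite Cmod_0. ring.
Qed.

Lemma closure_perp_range_eq0 {H : IPS} {z : nat -> H} {c : nat -> C} :
  (forall v, l2 (analysis z v)) -> in_closure_range z c -> in_perp_range z c ->
  forall n, c n = RtoC 0.
Proof.
  intros hz [hc happrox] [_ hperp].
  set (Sc := Series (fun n => Cmod (c n) ^ 2)).
  assert (hdist : forall v, sqrt Sc <= l2dist c (analysis z v)).
  { intro v. apply sqrt_le_1_alt.
    rewrite (is_series_unique _ _ (is_series_Cmod_sqr_sub hc (hz v))).
    rewrite (hperp _ (ex_intro _ v (fun _ => eq_refl))).
    pose proof (Series_ge0 (fun n => pow2_ge_0 (Cmod (analysis z v n))) (hz v)).
    change (Re (RtoC 0)) with 0. fold Sc. lra. }
  assert (hSc : Sc = 0).
  { pose proof (Series_ge0 (fun n => pow2_ge_0 (Cmod (c n))) hc) as hSc0. fold Sc in hSc0.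
    destruct hSc0 as [hpos | hzero]; [exfalso | auto].
    destruct (happrox (sqrt Sc) (sqrt_lt_R0 _ hpos)) as [v hv].
    pose proof (hdist v). lra. }
  intro n. apply Cmod_eq_0.
  pose proof (Series_ge_term n (fun n => pow2_ge_0 (Cmod (c n))) hc) as hn.
  pose proof (Cmod_ge_0 (c n)). fold Sc in hn. nra.
Qed.

Lemma K_frame_analysis_l2 {H : IPS} {K : H -> H} {z : nat -> H} :
  is_K_frame K z -> forall v, l2 (analysis z v).
Proof. intros (K' & _ & A & B & _ & _ & hf) v. exact (proj1 (hf v)). Qed.

Lemma analysis_ranges_orthogonal {H1 H2 : IPS} {x : nat -> H1} {y : nat -> H2} :
  (forall v, l2 (analysis x v)) ->
  (forall c, in_closure_range x c -> in_perp_range y c) ->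
  forall v1 v2, l2inner (analysis x v1) (analysis y v2) = RtoC 0.
Proof.
  intros hx hR v1 v2.
  apply (hR _ (analysis_in_closure_range x v1 (hx v1))).
  exists v2. reflexivity.
Qed.

Section DirectSum.

Context {H1 H2 : IPS}.
Hypothesis (hH1 : is_hilbert H1) (hH2 : is_hilbert H2).

Lemma hnorm_dsum_sqr (p : dsum H1 H2) :
  hnorm p ^ 2 = hnorm (fst p) ^ 2 + hnorm (snd p) ^ 2.
Proof.
  rewrite (hnorm_sqr hH1), (hnorm_sqr hH2). unfold hnorm. apply pow2_sqrt.
  pose proof (Re_inner_self_ge0 hH1 (fst p)). pose proof (Re_inner_self_ge0 hH2 (snd p)).
  simpl. lra.
Qed.

Lemma hnorm_fst_le (p : dsum H1 H2) : hnorm (fst p) <= hnorm p.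
Proof.
  pose proof (hnorm_dsum_sqr p). pose proof (pow2_ge_0 (hnorm (snd p))).
  pose proof (sqrt_pos (Re (inner _ (fst p) (fst p)))).
  pose proof (sqrt_pos (Re (inner _ p p))).
  unfold hnorm in *. nra.
Qed.

Lemma hnorm_snd_le (p : dsum H1 H2) : hnorm (snd p) <= hnorm p.
Proof.
  pose proof (hnorm_dsum_sqr p). pose proof (pow2_ge_0 (hnorm (fst p))).
  pose proof (sqrt_pos (Re (inner _ (snd p) (snd p)))).
  pose proof (sqrt_pos (Re (inner _ p p))).
  unfold hnorm in *. nra.
Qed.

Lemma psum_dsum_seq (a : nat -> C) (x : nat -> H1) (y : nat -> H2) (M : nat) :
  psum a (dsum_seq x y) M = (psum a x M, psum a y M).
Proof. induction M as [| M IHM]; simpl; [| rewrite IHM]; reflexivity. Qed.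

Lemma synthesis_maps_dsum_seq
  {a : nat -> C} {x : nat -> H1} {y : nat -> H2} {v : dsum H1 H2} :
  synthesis_maps (dsum_seq x y) a v ->
  synthesis_maps x a (fst v) /\ synthesis_maps y a (snd v).
Proof.
  intros [ha hconv].
  split; split; try exact ha; intros eps heps; destruct (hconv eps heps) as [N hN];
    exists N; intros M hM; specialize (hN M hM); rewrite psum_dsum_seq in hN.
  - exact (Rle_lt_trans _ _ _
             (hnorm_fst_le (vsub (H := dsum H1 H2) (psum a x M, psum a y M) v)) hN).
  - exact (Rle_lt_trans _ _ _
             (hnorm_snd_le (vsub (H := dsum H1 H2) (psum a x M, psum a y M) v)) hN).
Qed.

Lemma is_adjoint_dsum_op {K K' : H1 -> H1} {L L' : H2 -> H2} :
  is_adjoint K K' -> is_adjoint L L' -> is_adjoint (dsum_op K L) (dsum_op K' L').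
Proof. intros hK hL p q. simpl. rewrite hK, hL. reflexivity. Qed.

Lemma K_frame_dsum {K : H1 -> H1} {L : H2 -> H2} {x : nat -> H1} {y : nat -> H2} :
  is_K_frame K x -> is_K_frame L y ->
  (forall v1 v2, l2inner (analysis x v1) (analysis y v2) = RtoC 0) ->
  is_K_frame (dsum_op K L) (dsum_seq x y).
Proof.
  intros (K' & hK' & A1 & B1 & hA1 & hB1 & fx) (L' & hL' & A2 & B2 & hA2 & hB2 & fy) horth.
  exists (dsum_op K' L'). split; [exact (is_adjoint_dsum_op hK' hL') |].
  exists (Rmin A1 A2), (Rmax B1 B2).
  split; [apply Rmin_pos; assumption |].
  split; [apply Rlt_le_trans with B1; [assumption | apply Rmax_l] |].
  intros [v1 v2].
  destruct (fx v1) as (ex1 & lo1 & up1), (fy v2) as (ex2 & lo2 & up2).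
  set (S1 := Series (fun n => Cmod (inner H1 v1 (x n)) ^ 2)) in *.
  set (S2 := Series (fun n => Cmod (inner H2 v2 (y n)) ^ 2)) in *.
  assert (hs : is_series (fun n => Cmod (inner (dsum H1 H2) (v1, v2) (dsum_seq x y n)) ^ 2)
                 (S1 + S2)).
  { replace (S1 + S2) with (S1 + S2 + 2 * Re (l2inner (analysis x v1) (analysis y v2)))
      by (rewrite horth; simpl; ring).
    exact (is_series_Cmod_sqr_add ex1 ex2). }
  split; [eexists; exact hs |]. rewrite (is_series_unique _ _ hs).
  rewrite !hnorm_dsum_sqr. simpl fst. simpl snd.
  pose proof (Rmin_l A1 A2). pose proof (Rmin_r A1 A2).
  pose proof (Rmax_l B1 B2). pose proof (Rmax_r B1 B2).
  pose proof (pow2_ge_0 (hnorm (K' v1))). pose proof (pow2_ge_0 (hnorm (L' v2))).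
  pose proof (pow2_ge_0 (hnorm v1)). pose proof (pow2_ge_0 (hnorm v2)).
  split; nra.
Qed.

Lemma synthesis_injective_dsum {x : nat -> H1} {y : nat -> H2} :
  (forall v, l2 (analysis x v)) ->
  (forall c, in_perp_range y c -> in_closure_range x c) ->
  synthesis_injective (dsum_seq x y).
Proof.
  intros hx hperp a b v ha hb n.
  destruct (synthesis_maps_dsum_seq ha) as [hax hay].
  destruct (synthesis_maps_dsum_seq hb) as [hbx hby].
  apply Ceq_minus. apply (closure_perp_range_eq0 hx (c := fun n => a n - b n)%C).
  - exact (hperp _ (synthesis_maps_sub_perp hH2 hay hby)).
  - exact (synthesis_maps_sub_perp hH1 hax hbx).
Qed.

End DirectSum.

Theorem proposition2p20 (H1 H2 : IPS)
  (hH1 : is_hilbert H1) (hH2 : is_hilbert H2)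
  (sH1 : separable H1) (sH2 : separable H2)
  (K : H1 -> H1) (L : H2 -> H2)
  (hK : bounded_op K) (hL : bounded_op L)
  (x : nat -> H1) (y : nat -> H2)
  (hx : is_K_frame K x) (hy : is_K_frame L y)
  (hR : forall a : nat -> C, in_closure_range x a <-> in_perp_range y a) :
  is_K_minimal_frame (dsum_op K L) (dsum_seq x y).
Proof.
  pose proof (K_frame_analysis_l2 hx) as hxl2.
  split.
  - apply (K_frame_dsum hH1 hH2 hx hy), (analysis_ranges_orthogonal hxl2).
    intro c. apply hR.
  - apply (synthesis_injective_dsum hH1 hH2 hxl2).
    intro c. apply hR.
Qed.
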